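(* Let $\alpha>0$, $\gamma>0$, $\beta_2\in\mathbb{R}\setminus\{0\}$ and $\kappa,\chi\in\mathbb{R}\setminus\{0\}$, and set $K=-\frac{2\gamma\kappa}{\chi\beta_2}$, assumed to satisfy $K>0$. Define $$T(z,t)=Ke^{-\alpha z}t,\qquad Z(z)=\frac{K\gamma}{2\alpha\chi}\left(e^{-2\alpha z}-1\right).$$ Let $Q(Z,T)$ be a solution of the standard NLSE $$iQ_Z+\kappa Q_{TT}+\chi|Q|^2Q=0 .$$ Then $$v(z,t)=\sqrt{K}\exp\Big[i\frac{\alpha}{2\beta_2}t^2-\frac{\alpha}{2}z\Big]\,Q(Z(z),T(z,t))$$ is a solution of $$iv_z+\frac{\beta_2}{2}v_{tt}-\gamma e^{-\alpha z}|v|^2v+\frac{\alpha^2}{2\beta_2}t^2v=0 .$$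
   Context: All functions are complex-valued functions of real variables; solutions are understood classically (sufficiently differentiable). *)

From Stdlib Require Import Reals.
From Coquelicot Require Import Coquelicot.
Open Scope R_scope.

Definition Cexp (w : C) : C :=
  Cmult (RtoC (exp (Re w))) (cos (Im w), sin (Im w)).

(* Q : R -> R -> C (arguments Z, T) is a classical solution of
   i Q_Z + kappa Q_TT + chi |Q|^2 Q = 0 : the first partial derivatives exist
   and are jointly continuous (so Q is C^1), Q_TT exists, and the equation
   holds at every point. *)
Definition nlse_solution (kappa chi : R) (Q : R -> R -> C) : Prop :=
  exists QZ QT QTT : R -> R -> C,
    (forall Z T, is_derive (fun s => Q s T) Z (QZ Z T)) /\
    (forall Z T, is_derive (fun s => Q Z s) T (QT Z T)) /\
    (forall Z T, is_derive (fun s => QT Z s) T (QTT Z T)) /\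
    (forall p : R * R, continuous (fun q : R * R => QZ (fst q) (snd q)) p) /\
    (forall p : R * R, continuous (fun q : R * R => QT (fst q) (snd q)) p) /\
    (forall Z T,
       Cplus (Cplus (Cmult Ci (QZ Z T)) (Cmult (RtoC kappa) (QTT Z T)))
             (Cmult (RtoC (chi * (Cmod (Q Z T))^2)) (Q Z T)) = RtoC 0).

Definition target_solution (alpha beta2 gamma : R) (v : R -> R -> C) : Prop :=
  exists vz vt vtt : R -> R -> C,
    (forall z t, is_derive (fun s => v s t) z (vz z t)) /\
    (forall z t, is_derive (fun s => v z s) t (vt z t)) /\
    (forall z t, is_derive (fun s => vt z s) t (vtt z t)) /\
    (forall z t,
       Cplus (Cplus (Cplus (Cmult Ci (vz z t)) (Cmult (RtoC (beta2 / 2)) (vtt z t)))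
                    (Cmult (RtoC (- gamma * exp (- alpha * z) * (Cmod (v z t))^2)) (v z t)))
             (Cmult (RtoC (alpha^2 / (2 * beta2) * t^2)) (v z t)) = RtoC 0).

(* The map Q |-> v is a lens-type transformation: v = sqrt K * E * Q(Z, T) with the
   phase-amplitude factor E = exp(-alpha z / 2) exp(i alpha t^2 / (2 beta2)) and the
   rescaled variables Z(z), T(z, t) = K exp(-alpha z) t.  Computing v_z, v_t, v_tt by
   the product and chain rules, the residual of the target equation at (z, t) equals
   sqrt K * E * Z'(z) times the residual of the NLSE at (Z(z), T(z, t)).  Indeed the
   chirp exp(i alpha t^2 / (2 beta2)) cancels the damping term -i alpha v / 2, the
   potential alpha^2 t^2 v / (2 beta2) and the contribution of dT/dz, while
   Z' = -(K gamma / chi) exp(-2 alpha z) and T_t = K exp(-alpha z) turn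
   beta2 T_t^2 / 2 into kappa Z' and -gamma exp(-alpha z) |v|^2 into chi Z' |Q|^2;
   both identities amount to K = -2 gamma kappa / (chi beta2). *)

From Stdlib Require Import Reals Lra.
From Coquelicot Require Import Coquelicot.
Open Scope R_scope.

Lemma is_derive_Rmult (f g : R -> R) (x df dg : R) :
  is_derive f x df -> is_derive g x dg ->
  is_derive (fun s => f s * g s) x (df * g x + f x * dg).
Proof. intros Hf Hg. exact (is_derive_mult f g x df dg Hf Hg Rmult_comm). Qed.

Lemma is_derive_comp_2 (q qx : R -> R -> R) (a b : R -> R) (x qy da db : R) :
  (forall u w, is_derive (fun s => q s w) u (qx u w)) ->
  continuous (fun p : R * R => qx (fst p) (snd p)) (a x, b x) ->
  is_derive (fun s => q (a x) s) (b x) qy ->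
  is_derive a x da -> is_derive b x db ->
  is_derive (fun s => q (a s) (b s)) x (qx (a x) (b x) * da + qy * db).
Proof.
  intros Hqx Hc Hqy Ha Hb.
  pose proof (is_derive_filterdiff q (a x) (b x) qx qy
                (filter_forall _ (fun p => Hqx (fst p) (snd p))) Hqy Hc) as Hq.
  unfold is_derive in *.
  apply (filterdiff_ext_lin _ _ _
           (filterdiff_comp'_2 a b q x _ _
              (fun u w => plus (scal u (qx (a x) (b x))) (scal w qy)) Ha Hb Hq)).
  intros y. unfold scal, plus; simpl. unfold mult; simpl. ring.
Qed.

Section ComplexValued.
Local Open Scope C_scope.

Lemma is_derive_Re (f : R -> C) (x : R) (l : C) :
  is_derive f x l -> is_derive (fun s => Re (f s)) x (Re l).
Proof.
  intros H.
  apply (filterdiff_comp' f (fun c : C => fst c) x _ (fun c : C => fst c) H).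
  apply filterdiff_linear, is_linear_fst.
Qed.

Lemma is_derive_Im (f : R -> C) (x : R) (l : C) :
  is_derive f x l -> is_derive (fun s => Im (f s)) x (Im l).
Proof.
  intros H.
  apply (filterdiff_comp' f (fun c : C => snd c) x _ (fun c : C => snd c) H).
  apply filterdiff_linear, is_linear_snd.
Qed.

Lemma is_derive_C (f : R -> C) (x : R) (l : C) :
  is_derive (fun s => Re (f s)) x (Re l) -> is_derive (fun s => Im (f s)) x (Im l) ->
  is_derive f x l.
Proof.
  intros Hre Him. destruct l as [a b].
  apply filterdiff_ext with (fun s => (Re (f s), Im (f s))).
  { intros s. destruct (f s); reflexivity. }
  apply (filterdiff_comp'_2 (fun s => Re (f s)) (fun s => Im (f s)) (fun u v => (u, v) : C) x
           _ _ (fun u v => (u, v) : C) Hre Him).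
  apply filterdiff_ext with (fun c => c); [intros [u v]; reflexivity|].
  apply filterdiff_ext_lin with (fun c => c); [apply filterdiff_id | intros [u v]; reflexivity].
Qed.

Lemma is_derive_Cmult (f g : R -> C) (x : R) (df dg : C) :
  is_derive f x df -> is_derive g x dg ->
  is_derive (fun s => f s * g s) x (df * g x + f x * dg).
Proof.
  intros Hf Hg.
  pose proof (is_derive_Re _ _ _ Hf) as Hf1. pose proof (is_derive_Im _ _ _ Hf) as Hf2.
  pose proof (is_derive_Re _ _ _ Hg) as Hg1. pose proof (is_derive_Im _ _ _ Hg) as Hg2.
  apply is_derive_C.
  - replace (Re (df * g x + f x * dg))
      with (Re df * Re (g x) + Re (f x) * Re dg - (Im df * Im (g x) + Im (f x) * Im dg))%R
      by (unfold Re, Im; simpl; ring).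
    apply (is_derive_minus (V := R_NormedModule)
             (fun s => Re (f s) * Re (g s))%R (fun s => Im (f s) * Im (g s))%R);
      apply is_derive_Rmult; assumption.
  - replace (Im (df * g x + f x * dg))
      with (Re df * Im (g x) + Re (f x) * Im dg + (Im df * Re (g x) + Im (f x) * Re dg))%R
      by (unfold Re, Im; simpl; ring).
    apply (is_derive_plus (V := R_NormedModule)
             (fun s => Re (f s) * Im (g s))%R (fun s => Im (f s) * Re (g s))%R);
      apply is_derive_Rmult; assumption.
Qed.

Lemma is_derive_Cmult_l (c : C) (g : R -> C) (x : R) (dg : C) :
  is_derive g x dg -> is_derive (fun s => c * g s) x (c * dg).
Proof.
  intros Hg. replace (c * dg) with (0 * g x + c * dg) by ring.
  apply (is_derive_Cmult (fun _ => c) g x 0 dg); [|exact Hg].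
  exact (is_derive_const (K := R_AbsRing) (V := C_R_NormedModule) c x).
Qed.

Lemma is_derive_Cplus (f g : R -> C) (x : R) (df dg : C) :
  is_derive f x df -> is_derive g x dg -> is_derive (fun s => f s + g s) x (df + dg).
Proof. exact (is_derive_plus f g x df dg). Qed.

Lemma is_derive_comp_C (F : R -> C) (a : R -> R) (x da : R) (dF : C) :
  is_derive F (a x) dF -> is_derive a x da -> is_derive (fun s => F (a s)) x (da * dF).
Proof.
  intros HF Ha. replace (da * dF) with (scal da dF).
  - exact (is_derive_comp F a x dF da HF Ha).
  - unfold scal; simpl. unfold prod_scal, scal; simpl. unfold mult; simpl.
    apply injective_projections; simpl; ring.
Qed.

Lemma is_derive_comp_2_C (Q QX : R -> R -> C) (a b : R -> R) (x da db : R) (QY : C) :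
  (forall u w, is_derive (fun s => Q s w) u (QX u w)) ->
  continuous (fun p : R * R => QX (fst p) (snd p)) (a x, b x) ->
  is_derive (fun s => Q (a x) s) (b x) QY ->
  is_derive a x da -> is_derive b x db ->
  is_derive (fun s => Q (a s) (b s)) x (QX (a x) (b x) * da + QY * db).
Proof.
  intros HQX Hc HQY Ha Hb. apply is_derive_C.
  - replace (Re (QX (a x) (b x) * da + QY * db))
      with (Re (QX (a x) (b x)) * da + Re QY * db)%R by (unfold Re; simpl; ring).
    apply (is_derive_comp_2 (fun u w => Re (Q u w)) (fun u w => Re (QX u w)));
      try assumption.
    + intros u w. apply is_derive_Re, HQX.
    + exact (continuous_comp _ (fun c : C => Re c) _ Hc (continuous_fst _ _)).
    + apply is_derive_Re, HQY.
  - replace (Im (QX (a x) (b x) * da + QY * db))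
      with (Im (QX (a x) (b x)) * da + Im QY * db)%R by (unfold Im; simpl; ring).
    apply (is_derive_comp_2 (fun u w => Im (Q u w)) (fun u w => Im (QX u w)));
      try assumption.
    + intros u w. apply is_derive_Im, HQX.
    + exact (continuous_comp _ (fun c : C => Im c) _ Hc (continuous_snd _ _)).
    + apply is_derive_Im, HQY.
Qed.

Lemma is_derive_RtoC (f : R -> R) (x df : R) :
  is_derive f x df -> is_derive (fun s => RtoC (f s)) x (RtoC df).
Proof.
  intros Hf. apply is_derive_C; [exact Hf|].
  exact (is_derive_const (K := R_AbsRing) (V := R_NormedModule) 0%R x).
Qed.

Lemma is_derive_Cmult_logderiv (E F : R -> C) (x : R) (a dF : C) :
  is_derive E x (E x * a) -> is_derive F x dF ->
  is_derive (fun s => E s * F s) x (E x * (a * F x + dF)).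
Proof.
  intros HE HF. replace (E x * (a * F x + dF)) with (E x * a * F x + E x * dF) by ring.
  exact (is_derive_Cmult E F x _ _ HE HF).
Qed.

Lemma is_derive_Cexp (w : R -> C) (x : R) (dw : C) :
  is_derive w x dw -> is_derive (fun s => Cexp (w s)) x (Cexp (w x) * dw).
Proof.
  intros Hw.
  pose proof (is_derive_comp exp (fun s => Re (w s)) x _ _ (is_derive_exp _) (is_derive_Re _ _ _ Hw))
    as Hexp.
  pose proof (is_derive_comp cos (fun s => Im (w s)) x _ _ (is_derive_cos _) (is_derive_Im _ _ _ Hw))
    as Hcos.
  pose proof (is_derive_comp sin (fun s => Im (w s)) x _ _ (is_derive_sin _) (is_derive_Im _ _ _ Hw))
    as Hsin.
  apply is_derive_C.
  - apply (is_derive_ext (V := R_NormedModule) (fun s => exp (Re (w s)) * cos (Im (w s)))%R).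
    { intros s. unfold Cexp, Re, Im; simpl. ring. }
    replace (Re (Cexp (w x) * dw)) with
      (Re dw * exp (Re (w x)) * cos (Im (w x)) + exp (Re (w x)) * (Im dw * - sin (Im (w x))))%R
      by (unfold Cexp, Re, Im; simpl; ring).
    exact (is_derive_Rmult _ _ x _ _ Hexp Hcos).
  - apply (is_derive_ext (V := R_NormedModule) (fun s => exp (Re (w s)) * sin (Im (w s)))%R).
    { intros s. unfold Cexp, Re, Im; simpl. ring. }
    replace (Im (Cexp (w x) * dw)) with
      (Re dw * exp (Re (w x)) * sin (Im (w x)) + exp (Re (w x)) * (Im dw * cos (Im (w x))))%R
      by (unfold Cexp, Re, Im; simpl; ring).
    exact (is_derive_Rmult _ _ x _ _ Hexp Hsin).
Qed.

Lemma Cmod_Cexp (w : C) : Cmod (Cexp w) = exp (Re w).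
Proof.
  unfold Cexp. rewrite Cmod_mult, Cmod_R, Rabs_pos_eq by (apply Rlt_le, exp_pos).
  unfold Cmod; simpl. rewrite Rmult_1_r, Rmult_1_r, <- !Rsqr_def, Rplus_comm, sin2_cos2, sqrt_1.
  ring.
Qed.

End ComplexValued.

Section Lens.
Local Open Scope C_scope.

Lemma is_derive_lens_phase_z (alpha beta2 z t : R) :
  is_derive (fun s => Cexp (- alpha / 2 * s, alpha / (2 * beta2) * t ^ 2)%R) z
    (Cexp (- alpha / 2 * z, alpha / (2 * beta2) * t ^ 2)%R * (- alpha / 2)%R).
Proof.
  apply (is_derive_Cexp (fun s => (- alpha / 2 * s, alpha / (2 * beta2) * t ^ 2)%R)).
  apply is_derive_C; simpl; auto_derive; auto; ring.
Qed.

Lemma is_derive_lens_phase_t (alpha beta2 z t : R) : beta2 <> 0%R ->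
  is_derive (fun s => Cexp (- alpha / 2 * z, alpha / (2 * beta2) * s ^ 2)%R) t
    (Cexp (- alpha / 2 * z, alpha / (2 * beta2) * t ^ 2)%R * (Ci * (alpha / beta2 * t)%R)).
Proof.
  intros Hbeta2.
  apply (is_derive_Cexp (fun s => (- alpha / 2 * z, alpha / (2 * beta2) * s ^ 2)%R)).
  apply is_derive_C; simpl; auto_derive; auto; field; auto.
Qed.

Lemma is_derive_chirp (alpha beta2 t : R) :
  is_derive (fun s => Ci * (alpha / beta2 * s)%R) t (Ci * (alpha / beta2)%R).
Proof.
  apply is_derive_Cmult_l, is_derive_RtoC. auto_derive; auto; ring.
Qed.

End Lens.

Lemma exp_sqr (x : R) : exp x ^ 2 = exp (2 * x).
Proof. rewrite <- Rsqr_pow2. unfold Rsqr. rewrite <- exp_plus. f_equal. ring. Qed.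

Lemma is_derive_lens_Z (alpha gamma chi K z : R) : alpha <> 0 -> chi <> 0 ->
  is_derive (fun s => K * gamma / (2 * alpha * chi) * (exp (-2 * alpha * s) - 1)) z
    (- (K * gamma / chi) * exp (- alpha * z) ^ 2).
Proof.
  intros Halpha Hchi.
  rewrite exp_sqr. auto_derive; auto. replace (2 * (- alpha * z)) with (-2 * alpha * z) by ring.
  field; auto.
Qed.

(* The left-hand sides of the equations in [nlse_solution] and [target_solution],
   written so that they unfold to them verbatim. *)
Definition nlse_residual (kappa chi : R) (q qZ qTT : C) : C :=
  Cplus (Cplus (Cmult Ci qZ) (Cmult (RtoC kappa) qTT)) (Cmult (RtoC (chi * (Cmod q)^2)) q).

Definition target_residual (alpha beta2 gamma z t : R) (v vz vtt : C) : C :=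
  Cplus (Cplus (Cplus (Cmult Ci vz) (Cmult (RtoC (beta2 / 2)) vtt))
               (Cmult (RtoC (- gamma * exp (- alpha * z) * (Cmod v)^2)) v))
        (Cmult (RtoC (alpha^2 / (2 * beta2) * t^2)) v).

Lemma Cmod_Cmult_sqr (r : R) (e q : C) :
  Cmod (r * (e * q)) ^ 2 = r * r * Cmod e ^ 2 * Cmod q ^ 2.
Proof. rewrite !Cmod_mult, Cmod_R, !Rpow_mult_distr, pow2_abs. ring. Qed.

Section Residual.
Local Open Scope C_scope.

Lemma target_residual_lens (alpha beta2 gamma kappa chi K r z t : R) (e q qZ qT qTT : C) :
  beta2 <> 0%R -> chi <> 0%R -> K = (- (2 * gamma * kappa) / (chi * beta2))%R -> (r * r = K)%R ->
  (Cmod e ^ 2 = exp (- alpha * z))%R ->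
  let c := (K * exp (- alpha * z))%R in
  let dZ := (- (K * gamma / chi) * exp (- alpha * z) ^ 2)%R in
  let p := Ci * (alpha / beta2 * t)%R in
  target_residual alpha beta2 gamma z t
    (r * (e * q))
    (r * (e * ((- alpha / 2)%R * q + (qZ * dZ + qT * (- alpha * c * t)%R))))
    (r * (e * (p * (p * q + c * qT)
               + ((Ci * (alpha / beta2)%R * q + p * (c * qT)) + c * (c * qTT)))))
  = r * e * dZ * nlse_residual kappa chi q qZ qTT.
Proof.
  intros Hbeta2 Hchi HK Hr He c dZ p.
  unfold target_residual. rewrite Cmod_Cmult_sqr, He, Hr.
  unfold nlse_residual, c, dZ, p. subst K.
  destruct e as [e1 e2], q as [q1 q2], qZ as [a1 a2], qT as [b1 b2], qTT as [c1 c2].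
  unfold Ci, RtoC, Cmult, Cplus; cbn [fst snd].
  apply injective_projections; cbn [fst snd]; field; auto.
Qed.

End Residual.

Theorem theorem3p3p1 (alpha gamma beta2 kappa chi : R) (Q : R -> R -> C)
  (Halpha : 0 < alpha) (Hgamma : 0 < gamma) (Hbeta2 : beta2 <> 0)
  (Hkappa : kappa <> 0) (Hchi : chi <> 0)
  (HK : 0 < - (2 * gamma * kappa) / (chi * beta2))
  (HQ : nlse_solution kappa chi Q) :
  let K := - (2 * gamma * kappa) / (chi * beta2) in
  let T := fun z t : R => K * exp (- alpha * z) * t in
  let Z := fun z : R => K * gamma / (2 * alpha * chi) * (exp (-2 * alpha * z) - 1) in
  target_solution alpha beta2 gamma
    (fun z t : R =>
       Cmult (RtoC (sqrt K))
             (Cmult (Cexp (- alpha / 2 * z, alpha / (2 * beta2) * t^2))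
                    (Q (Z z) (T z t)))).
Proof.
  intros K T Z.
  destruct HQ as (QZ & QT & QTT & HQZ & HQT & HQTT & HQZ_cont & _ & HQ).
  assert (HZ : forall z, is_derive Z z (- (K * gamma / chi) * exp (- alpha * z) ^ 2))
    by (intros z; apply is_derive_lens_Z; lra).
  assert (HTz : forall z t, is_derive (fun s => T s t) z (- alpha * (K * exp (- alpha * z)) * t))
    by (intros z t; unfold T; auto_derive; [auto | ring]).
  assert (HTt : forall z t, is_derive (T z) t (K * exp (- alpha * z)))
    by (intros z t; unfold T; auto_derive; [auto | ring]).
  eexists; eexists; eexists; split; [|split; [|split]].
  - intros z t. apply is_derive_Cmult_l, is_derive_Cmult_logderiv;
      [apply is_derive_lens_phase_z |].
    apply (is_derive_comp_2_C Q QZ Z (fun s => T s t)); auto.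
  - intros z t. apply is_derive_Cmult_l, is_derive_Cmult_logderiv;
      [apply is_derive_lens_phase_t; exact Hbeta2 |].
    apply (is_derive_comp_C (Q (Z z)) (T z)); auto.
  - intros z t. apply is_derive_Cmult_l, is_derive_Cmult_logderiv;
      [apply is_derive_lens_phase_t; exact Hbeta2 |].
    apply is_derive_Cplus.
    + apply is_derive_Cmult; [apply is_derive_chirp |].
      apply (is_derive_comp_C (Q (Z z)) (T z)); auto.
    + apply is_derive_Cmult_l, (is_derive_comp_C (QT (Z z)) (T z)); auto.
  - intros z t. eapply eq_trans.
    + apply (target_residual_lens alpha beta2 gamma kappa chi K); auto.
      * apply sqrt_sqrt. unfold K. lra.
      * rewrite Cmod_Cexp, exp_sqr. simpl. f_equal. field.
    + unfold nlse_residual. rewrite HQ. ring.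
Qed.
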